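(* Let $\mathfrak{G}$ be a Lie algebra over $\mathbb{K}$ and $I\subseteq\mathfrak{G}$ an ideal. Let $U$ and $U'$ be $\mathfrak{G}/I$-modules (regarded as $\mathfrak{G}$-modules), and let $W$ be a $\mathfrak{G}$-module on which $I$ acts densely and irreducibly with $\mathrm{End}_I(W)=\mathbb{K}$. Then every $\mathfrak{G}$-module homomorphism $U\otimes W\to U'\otimes W$ is of the form $g\otimes\mathrm{id}_W$ for a unique $g\in\mathrm{Hom}_{\mathfrak{G}}(U,U')$; that is, $\mathrm{Hom}_{\mathfrak{G}}(U\otimes W,U'\otimes W)=\mathrm{Hom}_{\mathfrak{G}}(U,U')$.
   Context: A Lie subalgebra $I$ of a Lie algebra $\mathfrak{G}$ acts densely on a $\mathfrak{G}$-module $W$ if for every finite set $\{w_1,\dots,w_n\}\subset W$ and every $h\in\mathfrak{G}$ there is $h'\in I$ with $h'w_i=hw_i$ for all $i$. $\mathbb{K}$ is a field of characteristic $0$. *)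

From HB Require Import structures.
From mathcomp Require Import all_boot all_order all_algebra.
Set Implicit Arguments. Unset Strict Implicit. Unset Printing Implicit Defensive.
Import GRing.Theory.
Local Open Scope ring_scope.

Definition is_lie_bracket (K : fieldType) (G : lmodType K) (br : G -> G -> G) : Prop :=
  [/\ forall x, br x x = 0,
      forall a x y z, br (a *: x + y) z = a *: br x z + br y z,
      forall a x y z, br z (a *: x + y) = a *: br z x + br z y
    & forall x y z, br x (br y z) + br y (br z x) + br z (br x y) = 0].

Definition is_linear (K : fieldType) (V V' : lmodType K) (f : V -> V') : Prop :=
  forall a u v, f (a *: u + v) = a *: f u + f v.

Definition is_bilinear (K : fieldType) (U W V : lmodType K) (b : U -> W -> V) : Prop :=
  (forall w, is_linear (fun u => b u w)) /\ (forall u, is_linear (b u)).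

Definition is_lie_module (K : fieldType) (G : lmodType K) (br : G -> G -> G)
    (V : lmodType K) (act : G -> V -> V) : Prop :=
  [/\ forall v, is_linear (fun x => act x v),
      forall x, is_linear (act x)
    & forall x y v, act (br x y) v = act x (act y v) - act y (act x v)].

Definition is_ideal (K : fieldType) (G : lmodType K) (br : G -> G -> G) (I : {pred G}) : Prop :=
  [/\ 0 \in I,
      forall a x y, x \in I -> y \in I -> a *: x + y \in I
    & forall x y, y \in I -> br x y \in I].

(* A G-module on which I acts trivially, i.e. a G/I-module regarded as a G-module. *)
Definition is_quotient_module (K : fieldType) (G : lmodType K) (br : G -> G -> G)
    (I : {pred G}) (V : lmodType K) (act : G -> V -> V) : Prop :=
  is_lie_module br act /\ (forall x v, x \in I -> act x v = 0).

Definition is_module_hom (K : fieldType) (G : lmodType K) (V V' : lmodType K)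
    (act : G -> V -> V) (act' : G -> V' -> V') (f : V -> V') : Prop :=
  is_linear f /\ (forall x v, f (act x v) = act' x (f v)).

Definition acts_densely (K : fieldType) (G : lmodType K) (I : {pred G})
    (W : lmodType K) (act : G -> W -> W) : Prop :=
  forall (ws : seq W) (h : G), exists2 h', h' \in I & forall w, w \in ws -> act h' w = act h w.

Definition acts_irreducibly (K : fieldType) (G : lmodType K) (I : {pred G})
    (W : lmodType K) (act : G -> W -> W) : Prop :=
  (exists w : W, w != 0) /\
  forall S : {pred W},
    0 \in S -> (forall a u v, u \in S -> v \in S -> a *: u + v \in S) ->
    (forall x w, x \in I -> w \in S -> act x w \in S) ->
    (forall w, w \in S -> w = 0) \/ (forall w, w \in S).

Definition endI_scalar (K : fieldType) (G : lmodType K) (I : {pred G})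
    (W : lmodType K) (act : G -> W -> W) : Prop :=
  forall f : W -> W, is_linear f -> (forall x w, x \in I -> f (act x w) = act x (f w)) ->
    exists c : K, forall w, f w = c *: w.

Definition is_tensor_product (K : fieldType) (U W T : lmodType K) (t : U -> W -> T) : Prop :=
  is_bilinear t /\
  forall (V : lmodType K) (b : U -> W -> V), is_bilinear b ->
    exists! f : T -> V, is_linear f /\ forall u w, f (t u w) = b u w.

Definition is_tensor_action (K : fieldType) (G : lmodType K) (U W T : lmodType K)
    (t : U -> W -> T) (actU : G -> U -> U) (actW : G -> W -> W) (actT : G -> T -> T) : Prop :=
  (forall x, is_linear (actT x)) /\
  forall x u w, actT x (t u w) = t (actU x u) w + t u (actW x w).

(* Fix w0 ≠ 0 in W and a functional mu with mu w0 = 1, and let g u be the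
   contraction of phi (u ⊗ w0) by mu on the W factor.  For every functional f
   on U', the endomorphism w ↦ (f ⊗ id) (phi (u ⊗ w)) of W commutes with I,
   because I kills U and U'; so it is a scalar c, and evaluating against mu at
   w0 gives c = f (g u).  Hence phi (u ⊗ w) - g u ⊗ w is annihilated by all the
   maps f ⊗ id, which separate the points of U' ⊗ W because linear functionals
   separate points (Zorn's lemma: no finite dimension is assumed).
   Equivariance and uniqueness of g follow from the injectivity of u' ↦ u' ⊗ w0. *)

From HB Require Import structures.
From mathcomp Require Import all_boot all_order all_algebra.
From mathcomp Require Import boolp classical_sets.
Set Implicit Arguments. Unset Strict Implicit. Unset Printing Implicit Defensive.
Import GRing.Theory.
Local Open Scope ring_scope.
Local Open Scope classical_set_scope.

Section LinearMaps.
Variables (K : fieldType) (V V' : lmodType K) (f : V -> V').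
Hypothesis f_lin : is_linear f.

Lemma is_linearD u w : f (u + w) = f u + f w.
Proof. by have := f_lin 1 u w; rewrite !scale1r. Qed.

Lemma is_linear0 : f 0 = 0.
Proof. by apply: (addrI (f 0)); rewrite -is_linearD !addr0. Qed.

Lemma is_linearZ a u : f (a *: u) = a *: f u.
Proof. by have := f_lin a u 0; rewrite !addr0 is_linear0 addr0. Qed.

Lemma is_linearB u w : f (u - w) = f u - f w.
Proof. by have := f_lin (-1) w u; rewrite !scaleN1r addrC => ->; rewrite addrC. Qed.

Lemma is_linear_sum (J : Type) (r : seq J) (P : pred J) (F : J -> V) :
  f (\sum_(j <- r | P j) F j) = \sum_(j <- r | P j) f (F j).
Proof. by elim/big_rec2: _ => [|j y1 y2 _ <-]; rewrite ?is_linear0 ?is_linearD. Qed.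

End LinearMaps.

Lemma is_linear_comp (K : fieldType) (V1 V2 V3 : lmodType K)
    (f : V2 -> V3) (g : V1 -> V2) :
  is_linear f -> is_linear g -> is_linear (fun x => f (g x)).
Proof. by move=> f_lin g_lin a u v; rewrite g_lin f_lin. Qed.

Section LinearFunctionals.
Variables (K : fieldType) (V : lmodType K).

Definition is_subspace (M : set V) : Prop :=
  M 0 /\ forall a u w, M u -> M w -> M (a *: u + w).

Lemma maximal_subspace_avoiding (S : set V) (v : V) :
  is_subspace S -> ~ S v ->
  exists M, [/\ is_subspace M, S `<=` M, ~ M v &
    forall x, ~ M x -> exists m a, M m /\ v = m + a *: x].
Proof.
move=> S_sub Sv.
pose admissible M := [/\ is_subspace M, S `<=` M & ~ M v].
(* The empty set is allowed so that the empty chain has an upper bound. *)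
have [|A [A_adm A_max]] := @Zorn_bigcup _ (fun M => M = set0 \/ admissible M).
  move=> F F_adm F_chain.
  have adm X p : F X -> X p -> admissible X.
    by move=> FX Xp; case: (F_adm X FX) => // X0; rewrite X0 in Xp.
  have [[X FX X0]|noX] := pselect (exists2 X, F X & X 0); last first.
    left; apply/seteqP; split => // p [X FX Xp]; apply: noX; exists X => //.
    by have [[]] := adm X p FX Xp.
  have [[_ _] SX _] := adm X 0 FX X0.
  right; split; last 2 first.
  - by move=> s Ss; exists X => //; exact: SX.
  - by case=> Y FY Yv; have [_ _] := adm Y v FY Yv; apply.
  split; first by exists X.
  move=> a u w [X1 FX1 X1u] [X2 FX2 X2w].
  have [X12|X21] := F_chain X1 X2 FX1 FX2.
    exists X2 => //; have [[_ X2_lin] _ _] := adm X2 w FX2 X2w.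
    by apply: X2_lin => //; exact: X12.
  exists X1 => //; have [[_ X1_lin] _ _] := adm X1 u FX1 X1u.
  by apply: X1_lin => //; exact: X21.
have [A_empty|[[A0 A_lin] SA Av]] := A_adm.
  exfalso; apply: (A_max S); last by right; split.
  by rewrite A_empty; split => [//|/(_ 0 (proj1 S_sub))].
exists A; split => // x Ax; apply: contrapT => nAx.
pose N y := exists m a, A m /\ y = m + a *: x.
apply: (A_max N); last right.
  split; first by move=> y Ay; exists y, 0; rewrite scale0r addr0.
  by move=> NA; apply/Ax/NA; exists 0, 1; rewrite add0r scale1r.
split => //; first split.
- by exists 0, 0; rewrite scale0r addr0.
- move=> c _ _ [m1 [a1 [Am1 ->]]] [m2 [a2 [Am2 ->]]].
  exists (c *: m1 + m2), (c * a1 + a2); split; first exact: A_lin.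
  by rewrite scalerDr scalerA scalerDl addrACA.
- by move=> s Ss; exists s, 0; rewrite scale0r addr0; split => //; exact: SA.
Qed.

Lemma separating_functional (S : set V) (v : V) :
  is_subspace S -> ~ S v ->
  exists f : V -> K^o, [/\ is_linear f, forall s, S s -> f s = 0 & f v = 1].
Proof.
move=> S_sub Sv; have [M [[M0 M_lin] SM Mv M_max]] := maximal_subspace_avoiding S_sub Sv.
have coord x : exists c, M (x - c *: v).
  have [Mx|Mx] := pselect (M x); first by exists 0; rewrite scale0r subr0.
  have [m [a [Mm def_v]]] := M_max x Mx.
  have a_neq0 : a != 0.
    by apply: contra_notN Mv => /eqP a0; rewrite def_v a0 scale0r addr0.
  exists a^-1; suff -> : x - a^-1 *: v = - a^-1 *: m + 0 by apply: M_lin.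
  by rewrite def_v scalerDr scalerA mulVf // scale1r scaleNr opprD addrCA subrr !addr0.
have coord_uniq x c c' : M (x - c *: v) -> M (x - c' *: v) -> c = c'.
  move=> Mc Mc'; apply: contrapT => /eqP cc'; apply: Mv.
  have Mdv : M ((c' - c) *: v).
    suff <- : -1 *: (x - c' *: v) + (x - c *: v) = (c' - c) *: v by exact: M_lin.
    by rewrite scaleN1r opprB scalerBl addrA subrK.
  have := M_lin (c' - c)^-1 _ _ Mdv M0.
  by rewrite scalerA mulVf ?subr_eq0 1?eq_sym // scale1r addr0.
pose f x := projT1 (cid (coord x)).
have Mf x : M (x - f x *: v) := projT2 (cid (coord x)).
exists f; split.
- move=> a x y; apply/esym/(coord_uniq (a *: x + y)); last exact: Mf.
  suff -> : a *: x + y - (a * f x + f y) *: v = a *: (x - f x *: v) + (y - f y *: v).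
    exact: M_lin.
  by rewrite scalerDl -scalerA opprD addrACA -scalerBr.
- by move=> s Ss; apply/esym/(coord_uniq s); rewrite ?scale0r ?subr0 //; exact: SM.
- by apply/esym/(coord_uniq v); rewrite ?scale1r ?subrr.
Qed.

Lemma unit_functional (v : V) : v != 0 -> exists f : V -> K^o, is_linear f /\ f v = 1.
Proof.
move=> /eqP v_neq0.
have [|f [f_lin _ fv]] := @separating_functional (fun u => u = 0) v _ v_neq0.
  by split => // a _ _ -> ->; rewrite scaler0 addr0.
by exists f.
Qed.

Lemma functional_eq0 (v : V) :
  (forall f : V -> K^o, is_linear f -> f v = 0) -> v = 0.
Proof.
move=> fv0; apply/eqP; apply: contraT => /unit_functional [f [f_lin fv]].
by move: (fv0 f f_lin); rewrite fv => /eqP; rewrite oner_eq0.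
Qed.

End LinearFunctionals.

Section PureTensors.
Variables (K : fieldType) (U W : lmodType K).

Definition pure_sum (V : lmodType K) (b : U -> W -> V) (l : seq (U * W)) : V :=
  \sum_(p <- l) b p.1 p.2.

Lemma pure_sum_cons (V : lmodType K) (b : U -> W -> V) p l :
  pure_sum b (p :: l) = b p.1 p.2 + pure_sum b l.
Proof. exact: big_cons. Qed.

Lemma scalel_bilinear (f : U -> K^o) :
  is_linear f -> is_bilinear (fun u (w : W) => f u *: w).
Proof.
move=> f_lin; split=> [w|u] a x y /=; first by rewrite f_lin scalerDl scalerA.
by rewrite scalerDr !scalerA mulrC.
Qed.

Lemma scaler_bilinear (g : W -> K^o) :
  is_linear g -> is_bilinear (fun (u : U) w => g w *: u).
Proof.
move=> g_lin; split=> [w|u] a x y /=; first by rewrite scalerDr !scalerA mulrC.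
by rewrite g_lin scalerDl scalerA.
Qed.

Lemma pure_sum_shift (V : lmodType K) (b : U -> W -> V) (c : U * W -> K) u1 l :
  is_bilinear b ->
  pure_sum b [seq (p.1 + c p *: u1, p.2) | p <- l]
    = pure_sum b l + b u1 (\sum_(p <- l) c p *: p.2).
Proof.
move=> [bl br]; rewrite /pure_sum big_map (is_linear_sum (br u1)) -big_split /=.
apply: eq_bigr => p _.
by rewrite (is_linearD (bl _)) (is_linearZ (bl _)) (is_linearZ (br _)).
Qed.

(* Induction on the length of [l]: the second component of the head is either a
   combination of the others, and can be absorbed into them, or it is separated
   from them by a functional, which forces the first component to vanish. *)
Lemma pure_sum_eq0 (V : lmodType K) (b : U -> W -> V) (l : seq (U * W)) :
  is_bilinear b ->
  (forall f : U -> K^o, is_linear f -> pure_sum (fun u w => f u *: w) l = 0) ->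
  pure_sum b l = 0.
Proof.
move=> b_bil; have [bl _] := b_bil.
move n_def: (size l) => n; elim: n l n_def => [|n IH] [|[u1 w1] l] //= hsize hl.
  exact: big_nil.
have {hsize} size_l : size l = n by case: hsize.
pose span (w : W) := exists c : U * W -> K, w = \sum_(p <- l) c p *: p.2.
have [[c w1_def]|w1_span] := pselect (span w1).
  rewrite pure_sum_cons /= addrC w1_def -pure_sum_shift //.
  apply: IH; first by rewrite size_map size_l.
  move=> f f_lin; rewrite (pure_sum_shift c u1 l (scalel_bilinear f_lin)) addrC.
  by have := hl f f_lin; rewrite pure_sum_cons /= w1_def.
have span_sub : is_subspace span.
  split; first by exists (fun=> 0); rewrite big1 // => p _; rewrite scale0r.
  move=> a _ _ [c1 ->] [c2 ->]; exists (fun p => a * c1 p + c2 p).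
  by rewrite scaler_sumr -big_split; apply: eq_bigr => p _; rewrite scalerDl scalerA.
have [mu [mu_lin mu_span mu_w1]] := separating_functional span_sub w1_span.
have u1_0 : u1 = 0.
  apply: functional_eq0 => f f_lin; have := congr1 mu (hl f f_lin).
  rewrite pure_sum_cons /= (is_linearD mu_lin) (is_linearZ mu_lin) mu_w1.
  rewrite mu_span ?(is_linear0 mu_lin) ?addr0.
    by move=> fu1; rewrite -[f u1]mulr1.
  by rewrite /span; exists (fun p => f p.1).
rewrite pure_sum_cons u1_0 (is_linear0 (bl w1)) add0r; apply: IH => // f f_lin.
by have := hl f f_lin; rewrite pure_sum_cons u1_0 /= (is_linear0 f_lin) scale0r add0r.
Qed.

End PureTensors.

Section TensorProduct.
Variables (K : fieldType) (U W T : lmodType K) (t : U -> W -> T).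
Hypothesis hT : is_tensor_product t.

Lemma tensor_ext (V : lmodType K) (f1 f2 : T -> V) :
  is_linear f1 -> is_linear f2 -> (forall u w, f1 (t u w) = f2 (t u w)) -> f1 =1 f2.
Proof.
move=> f1_lin f2_lin f12; have [[tl tr] t_univ] := hT.
have b_bil : is_bilinear (fun u w => f1 (t u w)).
  by split=> [w|u] a x y /=; rewrite ?tl ?tr f1_lin.
have [f [_ f_uniq]] := t_univ V _ b_bil.
have <- : f = f1 by apply: f_uniq.
by have <- : f = f2 by apply: f_uniq; split => // u w; rewrite f12.
Qed.

Lemma tensor_pure_sum (x : T) : exists l, x = pure_sum t l.
Proof.
have [tl _] := proj1 hT; apply: contrapT => x_span.
have span_sub : is_subspace (fun y => exists l, y = pure_sum t l).
  split; first by exists [::]; rewrite /pure_sum big_nil.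
  move=> a _ _ [l1 ->] [l2 ->]; exists ([seq (a *: p.1, p.2) | p <- l1] ++ l2).
  rewrite /pure_sum big_cat big_map scaler_sumr; congr (_ + _).
  by apply: eq_bigr => p _; rewrite (is_linearZ (tl _)).
have [lam [lam_lin lam_span lam_x]] := separating_functional span_sub x_span.
have lam0 : lam =1 fun=> 0.
  apply: tensor_ext => // [a u v|u w]; first by rewrite scaler0 addr0.
  by apply: lam_span; exists [:: (u, w)]; rewrite /pure_sum big_seq1.
by move: lam_x; rewrite lam0 => /esym/eqP; rewrite oner_eq0.
Qed.

Lemma tensor_eq0 (x : T) :
  (forall (f : U -> K^o) (F : T -> W), is_linear f -> is_linear F ->
     (forall u w, F (t u w) = f u *: w) -> F x = 0) ->
  x = 0.
Proof.
move=> Fx0; have [t_bil t_univ] := hT; have [l x_def] := tensor_pure_sum x.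
rewrite x_def in Fx0 *; apply: pure_sum_eq0 t_bil _ => f f_lin.
have [F [[F_lin F_t] _]] := t_univ W _ (scalel_bilinear W f_lin).
rewrite -(Fx0 f F) // /pure_sum (is_linear_sum F_lin).
by apply: eq_bigr => p _; rewrite F_t.
Qed.

End TensorProduct.

Section Factorization.
Variables (K : fieldType) (G : lmodType K) (I : {pred G}) (U U' W T T' : lmodType K).
Variables (actU : G -> U -> U) (actU' : G -> U' -> U') (actW : G -> W -> W).
Variables (actT : G -> T -> T) (actT' : G -> T' -> T').
Variables (t : U -> W -> T) (t' : U' -> W -> T') (phi : T -> T').
Hypotheses (actU_I : forall x u, x \in I -> actU x u = 0)
  (actU'_I : forall x u', x \in I -> actU' x u' = 0)
  (actW_lin : forall x, is_linear (actW x)) (endI : endI_scalar I actW)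
  (hT : is_tensor_product t) (hT' : is_tensor_product t')
  (hactT : is_tensor_action t actU actW actT)
  (hactT' : is_tensor_action t' actU' actW actT')
  (hphi : is_module_hom actT actT' phi).

Lemma contraction_actI (f : U' -> K) (F : T' -> W) x :
  x \in I -> is_linear F -> (forall u' w, F (t' u' w) = f u' *: w) ->
  F \o actT' x =1 actW x \o F.
Proof.
move=> xI F_lin F_t'; have [[t'l _] _] := hT'; have [actT'_lin actT'_t'] := hactT'.
apply: (tensor_ext hT') => [||u' w /=]; try exact: is_linear_comp.
rewrite actT'_t' (is_linearD F_lin) actU'_I // (is_linear0 (t'l w)) (is_linear0 F_lin).
by rewrite add0r !F_t' (is_linearZ (actW_lin x)).
Qed.

Lemma contraction_phi_scalar (f : U' -> K) (F : T' -> W) u :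
  is_linear F -> (forall u' w, F (t' u' w) = f u' *: w) ->
  exists c : K, forall w, F (phi (t u w)) = c *: w.
Proof.
move=> F_lin F_t'; have [[tl tr] _] := hT; have [_ actT_t] := hactT.
have [phi_lin phi_hom] := hphi.
apply: endI => [|x w xI]; first exact: is_linear_comp (is_linear_comp phi_lin (tr u)).
have -> : t u (actW x w) = actT x (t u w).
  by rewrite actT_t actU_I // (is_linear0 (tl w)) add0r.
by rewrite phi_hom; exact: contraction_actI.
Qed.

Variables (w0 : W) (mu : W -> K^o) (C : T' -> U').
Hypotheses (mu_lin : is_linear mu) (mu_w0 : mu w0 = 1) (C_lin : is_linear C)
  (C_t' : forall u' w, C (t' u' w) = mu w *: u').

Definition factor (u : U) : U' := C (phi (t u w0)).

Lemma t'_w0_inj : injective (t'^~ w0).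
Proof. by move=> u' v' /(congr1 C); rewrite !C_t' mu_w0 !scale1r. Qed.

Lemma contraction_comm (f : U' -> K^o) (F : T' -> W) :
  is_linear f -> is_linear F -> (forall u' w, F (t' u' w) = f u' *: w) ->
  f \o C =1 mu \o F.
Proof.
move=> f_lin F_lin F_t'.
apply: (tensor_ext hT') => [||u' w /=]; try exact: is_linear_comp.
by rewrite C_t' F_t' (is_linearZ f_lin) (is_linearZ mu_lin); exact: mulrC.
Qed.

Lemma phi_pure u w : phi (t u w) = t' (factor u) w.
Proof.
apply/eqP; rewrite -subr_eq0; apply/eqP.
apply: (tensor_eq0 hT') => f F f_lin F_lin F_t'.
have [c Fc] := contraction_phi_scalar u F_lin F_t'.
have f_factor : f (factor u) = c.
  have := contraction_comm f_lin F_lin F_t' (phi (t u w0)).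
  by rewrite /= Fc (is_linearZ mu_lin) mu_w0 => ->; exact: mulr1.
by rewrite (is_linearB F_lin) Fc F_t' f_factor subrr.
Qed.

Lemma factor_module_hom : is_module_hom actU actU' factor.
Proof.
have [[tl _] _] := hT; have [phi_lin phi_hom] := hphi.
have [_ actT_t] := hactT; have [_ actT'_t'] := hactT'.
split=> [a u v|x u]; first by rewrite /factor (tl w0) phi_lin C_lin.
apply: t'_w0_inj; have := phi_hom x (t u w0).
by rewrite actT_t (is_linearD phi_lin) !phi_pure actT'_t' => /addIr.
Qed.

Lemma tensor_hom_factorization :
  exists! g : U -> U',
    is_module_hom actU actU' g /\ forall u w, phi (t u w) = t' (g u) w.
Proof.
exists factor; split; first by split; [exact: factor_module_hom | exact: phi_pure].
move=> g [_ phi_g]; apply: funext => u; apply: t'_w0_inj.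
by rewrite -phi_g phi_pure.
Qed.

End Factorization.

Theorem lemma3p1 (K : fieldType) (hK : [pchar K] =i pred0)
  (G : lmodType K) (br : G -> G -> G) (hG : is_lie_bracket br)
  (I : {pred G}) (hI : is_ideal br I)
  (U U' W : lmodType K)
  (actU : G -> U -> U) (actU' : G -> U' -> U') (actW : G -> W -> W)
  (hU : is_quotient_module br I actU) (hU' : is_quotient_module br I actU')
  (hW : is_lie_module br actW)
  (hdense : acts_densely I actW) (hirr : acts_irreducibly I actW)
  (hend : endI_scalar I actW)
  (T T' : lmodType K) (t : U -> W -> T) (t' : U' -> W -> T')
  (hT : is_tensor_product t) (hT' : is_tensor_product t')
  (actT : G -> T -> T) (actT' : G -> T' -> T')
  (hactT : is_tensor_action t actU actW actT)
  (hactT' : is_tensor_action t' actU' actW actT')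
  (phi : T -> T') (hphi : is_module_hom actT actT' phi) :
  exists! g : U -> U',
    is_module_hom actU actU' g /\ forall u w, phi (t u w) = t' (g u) w.
Proof.
have [[_ actU_I] [_ actU'_I] [_ actW_lin _]] := And3 hU hU' hW.
have [[w0 w0_neq0] _] := hirr.
have [mu [mu_lin mu_w0]] := unit_functional w0_neq0.
have [C [[C_lin C_t'] _]] := proj2 hT' U' _ (scaler_bilinear U' mu_lin).
apply: (tensor_hom_factorization actU_I actU'_I actW_lin hend hT hT' hactT hactT' hphi
  mu_lin mu_w0 C_lin) => u' w; exact: C_t'.
Qed.
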